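(* Let $n\ge1$, let $\mathbf{v}=(v_1,\dots,v_n)\in\mathbb{R}^n$ with $v_e>0$ for all $e$, let $V_c>0$, and let $\mathbf{w}\in\mathbb{R}^n_+$ (i.e. $\mathbf{w}\ge 0$). Consider the knapsack problem $$(\mathcal{P}_{kp}):\ \min\{P_u(\boldsymbol{\rho})=-\mathbf{w}^T\boldsymbol{\rho}\ :\ \mathbf{v}^T\boldsymbol{\rho}\le V_c,\ \boldsymbol{\rho}\in\{0,1\}^n\},$$ the set $\mathcal{S}_a^+=\{(\boldsymbol{\sigma},\tau)\in\mathbb{R}^n\times\mathbb{R}:\boldsymbol{\sigma}>0,\ \tau\ge 0\}$, and the canonical dual problem $$(\mathcal{P}_u^d):\ \max\Big\{P_u^d(\boldsymbol{\sigma},\tau)=-\sum_{e=1}^n\frac{(\sigma_e+w_e-\tau v_e)^2}{4\sigma_e}-\tau V_c\ :\ (\boldsymbol{\sigma},\tau)\in\mathcal{S}_a^+\Big\}.$$ If $\bar{\boldsymbol{\zeta}}=(\bar{\boldsymbol{\sigma}},\bar\tau)\in\mathcal{S}_a^+$ is a solution to $(\mathcal{P}_u^d)$, then $$\bar{\boldsymbol{\rho}}=\tfrac12[\mathrm{Diag}(\bar{\boldsymbol{\sigma}})]^{-1}(\bar{\boldsymbol{\sigma}}-\bar\tau\mathbf{v}+\mathbf{w})$$ is a unique global optimal solution to $(\mathcal{P}_{kp})$, and $$P_u(\bar{\boldsymbol{\rho}})=\min_{\boldsymbol{\rho}\in\mathcal{Z}_a}P_u(\boldsymbol{\rho})=\max_{\boldsymbol{\zeta}\in\mathcal{S}_a^+}P_u^d(\boldsymbol{\zeta})=P_u^d(\bar{\boldsymbol{\zeta}}),$$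 where $\mathcal{Z}_a=\{\boldsymbol{\rho}\in\{0,1\}^n:\mathbf{v}^T\boldsymbol{\rho}\le V_c\}$.
   Context: Vector inequalities are componentwise; $\boldsymbol{\sigma}>0$ means every component is strictly positive. In the paper $\mathbf{w}=\mathbf{c}(\mathbf{u})$ is the vector of element strain energies for a given displacement $\mathbf{u}$, and $\mathbf{v}$ is the vector of element volumes. *)

(* R is an arbitrary real field (the statement is purely
   algebraic/order-theoretic, so this covers the reals). Vectors in R^n are
   functions 'I_n -> R. *)
From HB Require Import structures.
From mathcomp Require Import all_boot all_order all_algebra.
Set Implicit Arguments. Unset Strict Implicit. Unset Printing Implicit Defensive.
Import Order.TTheory GRing.Theory Num.Theory.
Local Open Scope ring_scope.

Section KP.
Variables (R : realFieldType) (n : nat).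

Definition dotv (x y : 'I_n -> R) : R := \sum_(e < n) x e * y e.

Definition Pu (w rho : 'I_n -> R) : R := - dotv w rho.

Definition Za (v : 'I_n -> R) (Vc : R) (rho : 'I_n -> R) : Prop :=
  (forall e, rho e = 0 \/ rho e = 1) /\ dotv v rho <= Vc.

Definition Sa_plus (sigma : 'I_n -> R) (tau : R) : Prop :=
  (forall e, 0 < sigma e) /\ 0 <= tau.

Definition Pud (v w : 'I_n -> R) (Vc : R) (sigma : 'I_n -> R) (tau : R) : R :=
  - (\sum_(e < n) (sigma e + w e - tau * v e) ^+ 2 / (4 * sigma e)) - tau * Vc.

Definition rho_bar (v w sigma : 'I_n -> R) (tau : R) : 'I_n -> R :=
  fun e => (sigma e - tau * v e + w e) / (2 * sigma e).

End KP.

From mathcomp Require Import all_boot all_order all_algebra.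
From mathcomp Require Import lra ring.
From Stdlib Require Import FunctionalExtensionality.
Set Implicit Arguments. Unset Strict Implicit. Unset Printing Implicit Defensive.
Import Order.TTheory GRing.Theory Num.Theory.
Local Open Scope ring_scope.

(* Write a_e = w_e - tau v_e. Since (s + a)^2/(4s) = (s - |a|)^2/(4s) + (a + |a|)/2,
   maximality of the dual in each sigma_e forces a_e <> 0 and sigma_e = |a_e|, so
   rho_bar_e = 1 if a_e > 0 and 0 if a_e < 0.  In tau the dual is a concave
   quadratic with slope v^T rho_bar - V_c, so maximality over tau >= 0 gives
   feasibility of rho_bar and complementary slackness.  Finally
   P_u(rho) = - sum_e a_e rho_e - tau v^T rho, and on {0,1} each a_e rho_e is at most
   a_e rho_bar_e, with equality only if rho_e = rho_bar_e: weak duality is then tight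
   exactly at rho_bar. *)

Section ScalarFacts.
Variable R : realFieldType.

Lemma sqr_add_div_normE (a s : R) : 0 < s ->
  (s + a) ^+ 2 / (4 * s) = (s - `|a|) ^+ 2 / (4 * s) + (a + `|a|) / 2.
Proof.
move=> s_gt0; have [a_ge0|a_lt0] := leP 0 a.
- by rewrite ger0_norm //; field; lra.
- by rewrite ltr0_norm //; field; lra.
Qed.

Lemma argmin_sqr_add_div (a s0 : R) : 0 < s0 ->
  (forall s, 0 < s -> (s0 + a) ^+ 2 / (4 * s0) <= (s + a) ^+ 2 / (4 * s)) ->
  a != 0 /\ s0 = `|a|.
Proof.
move=> s0_gt0 s0_min.
have a_neq0 : a != 0.
  apply/eqP => a0; have := s0_min (s0 / 2); rewrite a0 !addr0.
  have -> : s0 ^+ 2 / (4 * s0) = s0 / 4 by field; lra.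
  have -> : (s0 / 2) ^+ 2 / (4 * (s0 / 2)) = s0 / 8 by field; lra.
  by move/(_ ltac:(lra)); lra.
have norm_gt0 : 0 < `|a| by rewrite normr_gt0.
split=> //; have := s0_min _ norm_gt0.
rewrite (sqr_add_div_normE a s0_gt0) (sqr_add_div_normE a norm_gt0).
rewrite subrr expr0n /= mul0r add0r gerDr.
rewrite ler_pdivrMr ?mulr_gt0 // mul0r => sqr_le0.
by apply/eqP; rewrite -subr_eq0 -sqrf_eq0 eq_le sqr_le0 sqr_ge0.
Qed.

Lemma le0_of_le_small_mul (x q c : R) : 0 < c -> 0 <= q ->
  (forall s, 0 < s <= c -> x <= s * q) -> x <= 0.
Proof.
move=> c_gt0 q_ge0 x_le; rewrite leNgt; apply/negP => x_gt0.
have den_gt0 : 0 < c * q + x by have := mulr_ge0 (ltW c_gt0) q_ge0; lra.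
(* s := c x / (c q + x) lies in (0, c] and s q < x. *)
have := x_le (c * x / (c * q + x)).
rewrite divr_gt0 ?mulr_gt0 //= ler_pdivrMr // => /(_ ltac:(nra)).
rewrite mulrAC ler_pdivlMr //; nra.
Qed.

Lemma concave_quadratic_kkt (tau d q : R) : 0 <= tau -> 0 <= q ->
  (forall t, 0 <= tau + t -> t * d - t ^+ 2 * q <= 0) ->
  d <= 0 /\ tau * d = 0.
Proof.
move=> tau_ge0 q_ge0 tmax.
have d_le0 : d <= 0.
  apply: (le0_of_le_small_mul ltr01 q_ge0) => s /andP[s_gt0 _].
  by have := tmax s ltac:(lra); rewrite expr2 -mulrA -mulrBr pmulr_rle0 // subr_le0.
split=> //; have [->|tau_neq0] := eqVneq tau 0; first by rewrite mul0r.
suff d_ge0 : 0 <= d by apply/eqP; rewrite mulf_eq0 [d == 0]eq_le d_le0 d_ge0 orbT.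
have tau_gt0 : 0 < tau by rewrite lt_def tau_neq0.
rewrite -oppr_le0; apply: (le0_of_le_small_mul tau_gt0 q_ge0) => s /andP[s_gt0 s_le].
have := tmax (- s) ltac:(lra).
by rewrite sqrrN expr2 -mulrA mulNr -!mulrN -mulrDr pmulr_rle0 //; lra.
Qed.

End ScalarFacts.

Section Knapsack.
Variables (R : realFieldType) (n : nat) (v w : 'I_n -> R) (Vc : R).

Definition lag_weight (tau : R) (e : 'I_n) : R := w e - tau * v e.

Definition dual_term (tau : R) (e : 'I_n) (s : R) : R :=
  (s + lag_weight tau e) ^+ 2 / (4 * s).

Lemma PudE sigma tau :
  Pud v w Vc sigma tau = - (\sum_(e < n) dual_term tau e (sigma e)) - tau * Vc.
Proof.
by congr (- _ - _); apply: eq_bigr => e _; rewrite /dual_term /lag_weight addrA.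
Qed.

Lemma rho_barE sigma tau e :
  rho_bar v w sigma tau e = (sigma e + lag_weight tau e) / (2 * sigma e).
Proof. by rewrite /rho_bar /lag_weight addrAC addrA. Qed.

Lemma Pu_lagrangian tau rho :
  Pu w rho = - (\sum_(e < n) lag_weight tau e * rho e) - tau * dotv v rho.
Proof.
rewrite /Pu /dotv mulr_sumr -opprD -big_split /=; congr (- _).
by apply: eq_bigr => e _; rewrite /lag_weight; ring.
Qed.

Lemma Pud_set_coord sigma tau e s :
  Pud v w Vc (fun j => if j == e then s else sigma j) tau =
  Pud v w Vc sigma tau + dual_term tau e (sigma e) - dual_term tau e s.
Proof.
rewrite !PudE (bigD1 e) //= [in RHS](bigD1 e) //= eqxx.
rewrite (eq_bigr (fun j => dual_term tau j (sigma j))); first by ring.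
by move=> j /negbTE ->.
Qed.

Lemma Pud_shift_tau sigma tau t : (forall e, sigma e != 0) ->
  Pud v w Vc sigma (tau + t) =
  Pud v w Vc sigma tau + t * (dotv v (rho_bar v w sigma tau) - Vc)
  - t ^+ 2 * \sum_(e < n) v e ^+ 2 / (4 * sigma e).
Proof.
move=> sigma_neq0; rewrite !PudE /dotv.
have term e : dual_term (tau + t) e (sigma e) = dual_term tau e (sigma e)
    - t * (v e * rho_bar v w sigma tau e) + t ^+ 2 * (v e ^+ 2 / (4 * sigma e)).
  by rewrite rho_barE /dual_term /lag_weight; field; rewrite sigma_neq0.
under eq_bigr do rewrite term.
by rewrite big_split sumrB /= -!mulr_sumr; ring.
Qed.

Section DualOptimum.
Variables (sigmab : 'I_n -> R) (taub : R).
Hypotheses (sigmab_gt0 : forall e, 0 < sigmab e) (taub_ge0 : 0 <= taub).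
Hypothesis dual_max : forall {sigma tau},
  Sa_plus sigma tau -> Pud v w Vc sigma tau <= Pud v w Vc sigmab taub.

Local Notation a := (lag_weight taub).
Local Notation rhob := (rho_bar v w sigmab taub).

Lemma dual_opt_sigma e : a e != 0 /\ sigmab e = `|a e|.
Proof.
apply: argmin_sqr_add_div => // s s_gt0.
have feasible : Sa_plus (fun j => if j == e then s else sigmab j) taub.
  by split=> // j; case: eqP.
by have := dual_max feasible; rewrite Pud_set_coord /dual_term; lra.
Qed.

Lemma rho_bar_opt e : rhob e = if 0 < a e then 1 else 0.
Proof.
rewrite rho_barE; have [a_neq0 ->] := dual_opt_sigma e.
have [a_lt0|a_gt0|a0] := ltrgtP (a e) 0; last by rewrite a0 eqxx in a_neq0.
- by rewrite ltr0_norm // addNr mul0r.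
- by rewrite gtr0_norm //; field; rewrite lt0r_neq0.
Qed.

Lemma dual_term_opt e : dual_term taub e (sigmab e) = a e * rhob e.
Proof.
rewrite rho_bar_opt /dual_term; have [a_neq0 ->] := dual_opt_sigma e.
have [a_lt0|a_gt0|a0] := ltrgtP (a e) 0; last by rewrite a0 eqxx in a_neq0.
- by rewrite ltr0_norm // addNr expr0n /= mul0r mulr0.
- by rewrite gtr0_norm // mulr1; field; rewrite lt0r_neq0.
Qed.

Lemma dual_opt_tau : dotv v rhob <= Vc /\ taub * (dotv v rhob - Vc) = 0.
Proof.
have q_ge0 : 0 <= \sum_(e < n) v e ^+ 2 / (4 * sigmab e).
  by apply: sumr_ge0 => e _; rewrite divr_ge0 ?sqr_ge0 ?mulr_ge0 ?ltW.
rewrite -subr_le0; apply: concave_quadratic_kkt taub_ge0 q_ge0 _ => t tau_t_ge0.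
have := dual_max (conj sigmab_gt0 tau_t_ge0).
by rewrite Pud_shift_tau => [|e]; [lra | exact: lt0r_neq0].
Qed.

Lemma Za_rho_bar_opt : Za v Vc rhob.
Proof.
split; last by case: dual_opt_tau.
by move=> e; rewrite rho_bar_opt; case: ifP; [right | left].
Qed.

Lemma Pu_rho_bar_opt : Pu w rhob = Pud v w Vc sigmab taub.
Proof.
have [_ slack] := dual_opt_tau; move: slack.
rewrite mulrBr (Pu_lagrangian taub) PudE (eq_bigr _ (fun e _ => dual_term_opt e)).
lra.
Qed.

Lemma lag_weight_mul_leif e (r : R) : r = 0 \/ r = 1 ->
  a e * r <= a e * rhob e ?= iff (r == rhob e).
Proof.
move=> r01; apply/leifP; rewrite rho_bar_opt; have [a_neq0 _] := dual_opt_sigma e.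
have [a_lt0|a_gt0|a0] := ltrgtP (a e) 0; last by rewrite a0 eqxx in a_neq0.
- by case: r01 => ->; rewrite ?eqxx // oner_eq0 mulr1 mulr0.
- by case: r01 => ->; rewrite ?eqxx // eq_sym oner_eq0 mulr1 mulr0.
Qed.

Lemma sum_lag_weight_leif rho : (forall e, rho e = 0 \/ rho e = 1) ->
  \sum_(e < n) a e * rho e <= \sum_(e < n) a e * rhob e
    ?= iff [forall e, rho e == rhob e].
Proof. by move=> rho01; apply: leif_sum => e _; apply: lag_weight_mul_leif. Qed.

Lemma Pu_ge_duality_gap rho : Za v Vc rho ->
  Pu w rhob + (\sum_(e < n) a e * rhob e - \sum_(e < n) a e * rho e) <= Pu w rho.
Proof.
case=> _ rho_le; have := ler_wpM2l taub_ge0 rho_le.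
rewrite Pu_rho_bar_opt PudE (eq_bigr _ (fun e _ => dual_term_opt e)).
rewrite (Pu_lagrangian taub rho); lra.
Qed.

Lemma rho_bar_min rho : Za v Vc rho -> Pu w rhob <= Pu w rho.
Proof.
move=> rhoZ; have [sum_le _] := sum_lag_weight_leif (proj1 rhoZ).
by apply: le_trans (Pu_ge_duality_gap rhoZ); rewrite lerDl subr_ge0.
Qed.

Lemma rho_bar_unique rho : Za v Vc rho -> Pu w rho = Pu w rhob -> rho = rhob.
Proof.
move=> rhoZ Pu_eq; have [sum_le sum_eq] := sum_lag_weight_leif (proj1 rhoZ).
have := Pu_ge_duality_gap rhoZ; rewrite Pu_eq gerDl subr_le0 => sum_ge.
move: sum_eq; rewrite eq_le sum_le sum_ge => /esym/forallP rho_eq.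
by apply: functional_extensionality => e; apply/eqP.
Qed.

End DualOptimum.

End Knapsack.

Theorem theorem2 (R : realFieldType) (n : nat) (hn : (0 < n)%N)
  (v w : 'I_n -> R) (Vc : R)
  (hv : forall e, 0 < v e) (hVc : 0 < Vc) (hw : forall e, 0 <= w e)
  (sigmab : 'I_n -> R) (taub : R)
  (hS : Sa_plus sigmab taub)
  (hmax : forall (sigma : 'I_n -> R) (tau : R),
      Sa_plus sigma tau -> Pud v w Vc sigma tau <= Pud v w Vc sigmab taub) :
  let rhob := rho_bar v w sigmab taub in
  [/\ Za v Vc rhob,
      (forall rho, Za v Vc rho -> Pu w rhob <= Pu w rho),
      (forall rho, Za v Vc rho -> Pu w rho = Pu w rhob -> rho = rhob)
    & Pu w rhob = Pud v w Vc sigmab taub].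
Proof.
move=> rhob; case: hS => sigmab_gt0 taub_ge0; split.
- exact: Za_rho_bar_opt.
- exact: rho_bar_min.
- exact: rho_bar_unique.
- exact: Pu_rho_bar_opt.
Qed.
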